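(* Let $T$ be a tree and $f,g$ proper 3-colorings of $T$. Then $$\operatorname{dist}_{\mathcal{C}_3(T)}(f,g)=\min_{h\in D(f,g)}\|h\|_1 .$$
   Context: Let $T$ be a finite tree with vertex set $V$ and edge set $E$. A proper 3-coloring of $T$ is a map $f\colon V\to\mathbb{Z}/3\mathbb{Z}$ with $f(u)\neq f(v)$ for every edge $uv\in E$. The 3-coloring graph $\mathcal{C}_3(T)$ has the proper 3-colorings as vertices, two colorings adjacent iff they differ at exactly one vertex. A labeling of $T$ is a map $h\colon V\to\mathbb{Z}$ with $|h(u)-h(v)|\le 1$ for every edge $uv\in E$, and $\|h\|_1=\sum_{v\in V}|h(v)|$. Given proper 3-colorings $f,g$, $D(f,g)$ is the set of labelings $h$ with $h(v)\equiv g(v)-f(v)\pmod 3$ for all $v\in V$. *)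

From HB Require Import structures.
From mathcomp Require Import all_boot all_order all_algebra.
Set Implicit Arguments. Unset Strict Implicit. Unset Printing Implicit Defensive.
Import Order.TTheory GRing.Theory Num.Theory.
Local Open Scope ring_scope.

Definition simple_graph (V : finType) (e : rel V) : Prop :=
  symmetric e /\ irreflexive e.

Definition connected_graph (V : finType) (e : rel V) : Prop :=
  forall u v : V, connect e u v.

Definition acyclic_graph (V : finType) (e : rel V) : Prop :=
  forall c : seq V, uniq c -> (2 < size c)%N -> ~~ cycle e c.

Definition is_tree (V : finType) (e : rel V) : Prop :=
  simple_graph e /\ connected_graph e /\ acyclic_graph e.

Definition coloring (V : finType) := {ffun V -> 'Z_3}.

Definition proper3 (V : finType) (e : rel V) (f : coloring V) : bool :=
  [forall u, forall v, e u v ==> (f u != f v)].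

Definition C3_adj (V : finType) (e : rel V) : rel (coloring V) :=
  fun f g => [&& proper3 e f, proper3 e g & #|[set v | f v != g v]| == 1%N].

Definition C3_walk (V : finType) (e : rel V) (f : coloring V) (p : seq (coloring V))
  (g : coloring V) : Prop :=
  path (C3_adj e) f p /\ last f p = g.

Definition C3_dist_is (V : finType) (e : rel V) (f g : coloring V) (n : nat) : Prop :=
  (exists p, C3_walk e f p g /\ size p = n) /\
  (forall p, C3_walk e f p g -> (n <= size p)%N).

Definition labeling (V : finType) (e : rel V) (h : V -> int) : Prop :=
  forall u v, e u v -> `|h u - h v| <= 1.

Definition norm1 (V : finType) (h : V -> int) : int := \sum_(v : V) `|h v|.

Definition inD (V : finType) (e : rel V) (f g : coloring V) (h : V -> int) : Prop :=
  labeling e h /\ forall v, (h v)%:~R = g v - f v :> 'Z_3.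

Definition minD_is (V : finType) (e : rel V) (f g : coloring V) (n : int) : Prop :=
  (exists h, inD e f g h /\ norm1 h = n) /\
  (forall h, inD e f g h -> n <= norm1 h).


(* A recoloring step f ~ f' changes g - f only at one vertex v, by the nonzero
   residue f' v - f v; adding its lift in {-1, 1} to h' in D(f', g) at v gives
   an element of D(f, g), so a walk of length n yields h in D(f, g) with
   ||h||_1 <= n.  Conversely, let h in D(f, g) be nonzero, t a value of maximal
   absolute value and s its sign.  Orient an edge from u to w when f w = f u + s;
   on the subforest {h = t} this orientation has a sink v.  Recoloring v to
   f v + s is proper (neighbours at height t are excluded by the sink property,
   neighbours at height t - s by h = g - f mod 3 and g v <> g w), and h v := t - s
   keeps a labeling in the new D, of norm ||h||_1 - 1.  As D(f, g) is nonempty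
   on a tree (lift g - f leaf by leaf), the distance is the minimal norm. *)

From Stdlib Require Import Classical Wf_nat.
From HB Require Import structures.
From mathcomp Require Import all_boot all_order all_algebra zify ring.
Set Implicit Arguments.
Unset Strict Implicit.
Unset Printing Implicit Defensive.

Import Order.TTheory GRing.Theory Num.Theory.
Local Open Scope ring_scope.

Ltac case_Z3 a := let lt_a3 := fresh in case: a => [[|[|[|?]]] lt_a3] //.

Definition lift3 (z : 'Z_3) : int := if z == 0 then 0 else if z == 1 then 1 else -1.

Lemma lift3K z : (lift3 z)%:~R = z.
Proof. by apply/eqP; case_Z3 z. Qed.

Lemma norm_lift3 z : `|lift3 z| <= 1.
Proof. by case_Z3 z. Qed.

(* Across an edge vw, with x = h'(v) - h'(w), when v is recolored from a to a',
   c is the colour of w and r = g v - g w. *)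
Lemma lift3_recolor_edge (x : int) (a a' c r : 'Z_3) :
  `|x| <= 1 -> r != 0 -> a != c -> a' != c -> x%:~R = r - (a' - c) ->
  `|x + lift3 (a' - a)| <= 1.
Proof.
move=> x_le1; have : x = -1 \/ x = 0 \/ x = 1 by lia.
by case=> [->|[->|->]]; case_Z3 a; case_Z3 a'; case_Z3 c; case_Z3 r.
Qed.

Lemma Z3_step_asym (a b s : 'Z_3) : s != 0 -> b = a + s -> a <> b + s.
Proof. by case_Z3 a; case_Z3 b; case_Z3 s. Qed.

Lemma addr_neq_self (M : zmodType) (a s : M) : s != 0 -> a + s != a.
Proof. by rewrite -{2}[a]addr0 (inj_eq (addrI a)). Qed.

Lemma norm1_update (V : finType) (h : V -> int) v x :
  norm1 (fun u => if u == v then x else h u) = norm1 h - `|h v| + `|x|.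
Proof.
rewrite /norm1 [in RHS](bigD1 v) //= (bigD1 v) //= eqxx.
under eq_bigr => u /negbTE -> do [].
ring.
Qed.

Lemma norm1_ge0 (V : finType) (h : V -> int) : 0 <= norm1 h.
Proof. exact: sumr_ge0. Qed.

Section Forest.
Variables (V : finType) (e : rel V).
Hypotheses (e_sym : symmetric e) (e_irr : irreflexive e) (e_acyclic : acyclic_graph e).

Definition simple_path_in (S : {set V}) (x : V) (p : seq V) :=
  [&& uniq (x :: p), all (mem S) (x :: p) & path e x p].

Lemma maximal_simple_path S x p : simple_path_in S x p ->
  exists x' p', simple_path_in S x' p' /\ forall y, y \in S -> e x' y -> y \in x' :: p'.
Proof.
have [n] := ubnP (#|V| - size p)%N; elim: n x p => // n IH x p hn hxp.
case: (boolP [exists y, [&& y \in S, e x y & y \notin x :: p]]); last first.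
  move/existsPn=> hmax; exists x, p; split=> // y yS exy.
  by apply: contraR (hmax y) => ynew; rewrite yS exy ynew.
case/existsP=> y /and3P[yS exy ynew].
have yxp_uniq : uniq (y :: x :: p) by case/andP: hxp; rewrite /= ynew => ->.
apply: (IH y (x :: p)); last first.
  by move: hxp; rewrite /simple_path_in yxp_uniq /= yS e_sym exy => /and3P[_ -> ->].
have : (size (y :: x :: p) <= #|V|)%N by rewrite -(card_uniqP yxp_uniq) max_card.
move: hn; rewrite /=; lia.
Qed.

Lemma acyclic_leaf (S : {set V}) : S != set0 ->
  exists2 x, x \in S & exists y0, forall y, y \in S -> e x y -> y = y0.
Proof.
case/set0Pn=> x0 x0S.
have [|x [p [/and3P[xp_uniq xp_S xp_path] xp_max]]] := @maximal_simple_path S x0 [::].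
  by rewrite /simple_path_in /= x0S.
exists x; first by case/andP: xp_S.
exists (head x p) => y yS exy.
have /predU1P[yx|yp] := xp_max y yS exy; first by move: exy; rewrite yx e_irr.
case/splitPr: yp xp_path xp_uniq => [[|z p1] p2] // xp_path xp_uniq.
have cyc_uniq : uniq (x :: rcons (z :: p1) y).
  by move: xp_uniq; rewrite -cat_rcons -rcons_cons -cat_cons cat_uniq => /andP[].
have cyc : cycle e (x :: rcons (z :: p1) y).
  rewrite /= rcons_path last_rcons (e_sym y) exy andbT rcons_path.
  by move: xp_path; rewrite /= cat_path /= => /and4P[-> -> -> _].
by have := e_acyclic cyc_uniq; rewrite cyc /= size_rcons => /(_ isT).
Qed.

Lemma acyclic_sink (d : rel V) (S : {set V}) :
  (forall u w, d u w -> e u w) -> (forall u w, d u w -> ~~ d w u) -> S != set0 ->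
  exists2 v, v \in S & forall w, w \in S -> ~~ d v w.
Proof.
move=> de d_asym; have [n] := ubnP #|S|; elim: n S => // n IH S hn S_ne.
have [x xS [y0 hy0]] := acyclic_leaf S_ne.
have [x_sink|] := boolP [forall w, (w \in S) ==> ~~ d x w].
  by exists x => // w wS; move/forallP/(_ w): x_sink; rewrite wS.
case/forallPn=> w; rewrite negb_imply negbK => /andP[wS dxw].
have wx : w != x by apply: contraTneq (de _ _ dxw) => ->; rewrite e_irr.
have card_lt : (#|S :\ x| < n)%N by rewrite (cardsD1 x S) xS in hn.
have S'_ne : S :\ x != set0 by apply/set0Pn; exists w; rewrite !inE wx.
have [z] := IH _ card_lt S'_ne.
rewrite !inE => /andP[zx zS] z_sink; exists z => // u uS.
have [->|ux] := eqVneq u x; last by apply: z_sink; rewrite !inE ux.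
apply/negP => dzx.
have exz : e x z by rewrite e_sym de.
have zw : z = w by rewrite (hy0 z zS exz) (hy0 w wS (de _ _ dxw)).
by move: (d_asym _ _ dxw); rewrite -zw dzx.
Qed.

Lemma symmetric_edges_at (P : V -> V -> Prop) v :
  (forall u w, P u w -> P w u) -> (forall w, e v w -> P v w) ->
  (forall u w, e u w -> u != v -> w != v -> P u w) ->
  forall u w, e u w -> P u w.
Proof.
move=> P_sym P_at P_off u w.
have [-> | uv] := eqVneq u v; first exact: P_at.
have [-> euv | wv euw] := eqVneq w v; last exact: P_off.
by apply: P_sym; apply: P_at; rewrite e_sym.
Qed.

End Forest.

Section Recoloring.
Variables (V : finType) (e : rel V).
Hypotheses (e_sym : symmetric e) (e_irr : irreflexive e) (e_acyclic : acyclic_graph e).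

Lemma proper3P (f : coloring V) : reflect (forall u w, e u w -> f u != f w) (proper3 e f).
Proof.
apply: (iffP forallP) => [pf u w euw | pf u].
  by move/forallP/(_ w)/implyP: (pf u); apply.
by apply/forallP => w; apply/implyP; apply: pf.
Qed.

Lemma exists_labeling_lift (r : V -> 'Z_3) :
  exists h : V -> int, labeling e h /\ forall v, (h v)%:~R = r v.
Proof.
suff /(_ [set: V]) [h [hl hr]] : forall S : {set V}, exists h : V -> int,
    (forall u w, e u w -> u \in S -> w \in S -> `|h u - h w| <= 1) /\
    forall v, (h v)%:~R = r v.
  by exists h; split=> // u w euw; apply: hl; rewrite ?inE.
move=> S; have [n] := ubnP #|S|; elim: n S => // n IH S hn.
have [->|S_ne] := eqVneq S set0.
  by exists (fun v => lift3 (r v)); split=> [u w _|v]; rewrite ?inE ?lift3K.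
have [x xS [y0 hy0]] := acyclic_leaf e_sym e_irr e_acyclic S_ne.
have card_lt : (#|S :\ x| < n)%N by rewrite (cardsD1 x S) xS in hn.
have [h' [h'l h'r]] := IH _ card_lt.
pose hx := h' y0 + lift3 (r x - r y0).
exists (fun u => if u == x then hx else h' u); split; last first.
  move=> v; case: eqP => [->|_]; last exact: h'r.
  by rewrite intrD h'r lift3K; ring.
apply: (symmetric_edges_at e_sym (v := x)) => [u w + wS uS|w exw _ wS|u w euw ux wx uS wS].
- by rewrite distrC; apply.
- have wx : w != x by apply: contraTneq exw => ->; rewrite e_irr.
  rewrite eqxx (negbTE wx) (hy0 w wS exw) /hx; have := norm_lift3 (r x - r y0); lia.
- by rewrite (negbTE ux) (negbTE wx); apply: h'l; rewrite // !inE ?ux ?wx.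
Qed.

Lemma inD_C3_adj (f f' g : coloring V) (h' : V -> int) :
  proper3 e g -> C3_adj e f f' -> inD e f' g h' ->
  exists h, inD e f g h /\ norm1 h <= norm1 h' + 1.
Proof.
move=> /proper3P pg /and3P[/proper3P pf /proper3P pf' /cards1P[v diff_v]] [h'l h'r].
have f_off u : u != v -> f u = f' u.
  by move=> uv; apply/eqP; apply: contraNT uv; rewrite -in_set1 -diff_v inE.
pose dv := lift3 (f' v - f v).
exists (fun u => if u == v then h' v + dv else h' u); split; first split.
- apply: (symmetric_edges_at e_sym (v := v)) => [u w|w evw|u w euw uv wv].
  + by rewrite distrC.
  + have wv : w != v by apply: contraTneq evw => ->; rewrite e_irr.
    rewrite eqxx (negbTE wv) addrAC.
    apply: (lift3_recolor_edge (c := f w) (r := g v - g w) (h'l _ _ evw)).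
    * by rewrite subr_eq0; apply: pg.
    * exact: pf.
    * by rewrite (f_off w wv); apply: pf'.
    * by rewrite intrB !h'r (f_off w wv); ring.
  + by rewrite (negbTE uv) (negbTE wv); apply: h'l.
- move=> u; case: (eqVneq u v) => [->|uv]; last by rewrite h'r f_off.
  by rewrite intrD h'r lift3K; ring.
- rewrite norm1_update; have := ler_normD (h' v) dv; have := norm_lift3 (f' v - f v); lia.
Qed.

Lemma C3_path_proper_last (f : coloring V) p :
  proper3 e f -> path (C3_adj e) f p -> proper3 e (last f p).
Proof. by elim: p f => //= f' p IH f _ /andP[/and3P[_ pf' _]]; apply: IH. Qed.

Lemma C3_walk_inD (f g : coloring V) p : proper3 e f -> C3_walk e f p g ->
  exists h, inD e f g h /\ norm1 h <= (size p)%:Z.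
Proof.
move=> + [+ <-]; elim: p f => [|f' p IH] f pf /=.
  move=> _; exists (fun=> 0); split; last by rewrite /norm1 big1.
  by split=> [u w _|v]; rewrite subrr.
move=> /andP[adj p_path]; have pf' : proper3 e f' by case/and3P: adj.
have [h' [h'D h'n]] := IH f' pf' p_path.
have [h [hD hn]] := inD_C3_adj (C3_path_proper_last pf' p_path) adj h'D.
by exists h; split=> //; lia.
Qed.

Lemma inD_descent (f g : coloring V) (h : V -> int) :
  proper3 e f -> proper3 e g -> inD e f g h -> 0 < norm1 h ->
  exists f' h', [/\ C3_adj e f f', inD e f' g h' & norm1 h' = norm1 h - 1].
Proof.
move=> pf /proper3P pg [hl hr] h_pos; have /proper3P pf_edge := pf.
have [v0 /andP[_ hv0]] : exists v0, true && (0 < `|h v0|).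
  by apply: psumr_neq0P => [v _|]; rewrite ?normr_ge0 //; apply/eqP; rewrite gt_eqF.
have [vm _ h_max] := @arg_maxnP _ v0 predT (fun u => absz (h u)) isT.
set t := h vm.
have t_max w : `|h w| <= `|t| by have := h_max w isT; rewrite /t; lia.
have t_neq0 : t != 0 by have := t_max v0; lia.
pose s : int := if 0 < t then 1 else -1.
have norm_t : `|t| = s * t by rewrite /s; case: ifP; lia.
pose sigma : 'Z_3 := s%:~R.
have sigma_neq0 : sigma != 0 by rewrite /sigma /s; case: ifP.
pose d u w := e u w && (f w == f u + sigma).
have [v vS v_sink] : exists2 v, v \in [set u | h u == t] &
    forall w, w \in [set u | h u == t] -> ~~ d v w.
  apply: (acyclic_sink e_sym e_irr e_acyclic) => [u w /andP[] //|u w /andP[_ /eqP dw]|].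
    by apply/negP => /andP[_ /eqP du]; apply: Z3_step_asym sigma_neq0 dw du.
  by apply/set0Pn; exists vm; rewrite inE.
have hv : h v = t by move: vS; rewrite inE => /eqP.
have nbr_h w : e v w -> h w = t \/ h w = t - s.
  move=> evw; have := hl v w evw; have := t_max w; rewrite hv.
  by move: t_neq0 norm_t; rewrite /s; case: ifP; lia.
have nbr_f w : e v w -> f w != f v + sigma.
  move=> evw; case: (nbr_h w evw) => hw.
    by have := v_sink w; rewrite inE hw eqxx /d evw => /(_ isT).
  have s_diff : s = h v - h w by rewrite hv hw; ring.
  have -> : f v + sigma = f w + (g v - g w) by rewrite /sigma s_diff intrB !hr; ring.
  by rewrite eq_sym addr_neq_self // subr_eq0 pg.
pose f' : coloring V := [ffun u => if u == v then f v + sigma else f u].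
exists f', (fun u => if u == v then t - s else h u); split.
- apply/and3P; split=> //.
    apply/proper3P; apply: (symmetric_edges_at e_sym (v := v)) => [u w|w evw|u w euw uv wv].
    + by rewrite eq_sym.
    + have wv : w != v by apply: contraTneq evw => ->; rewrite e_irr.
      by rewrite !ffunE eqxx (negbTE wv) eq_sym nbr_f.
    + by rewrite !ffunE (negbTE uv) (negbTE wv) pf_edge.
  apply/cards1P; exists v; apply/setP => u; rewrite !inE ffunE.
  by case: (eqVneq u v) => [->|_]; rewrite ?eqxx // eq_sym addr_neq_self.
- split=> [|u]; last first.
    rewrite ffunE; case: (eqVneq u v) => [->|_]; last exact: hr.
    by rewrite /sigma intrB -hv hr; ring.
  apply: (symmetric_edges_at e_sym (v := v)) => [u w|w evw|u w euw uv wv].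
  + by rewrite distrC.
  + have wv : w != v by apply: contraTneq evw => ->; rewrite e_irr.
    rewrite eqxx (negbTE wv); have := nbr_h w evw.
    by move: t_neq0; rewrite /s; case: ifP; lia.
  + by rewrite (negbTE uv) (negbTE wv); apply: hl.
- rewrite norm1_update hv; move: t_neq0 norm_t; rewrite /s; case: ifP; lia.
Qed.

Lemma inD_C3_walk (f g : coloring V) (h : V -> int) :
  proper3 e f -> proper3 e g -> inD e f g h ->
  exists p, C3_walk e f p g /\ (size p)%:Z <= norm1 h.
Proof.
move=> + pg; have [n] := ubnP (absz (norm1 h)).
elim: n f h => // n IH f h hn pf hD.
have := norm1_ge0 h; rewrite le0r => /orP[/eqP h0 | h_pos].
  exists [::]; split; last by rewrite h0.
  split=> //; apply/ffunP => v; apply/esym/subr0_eq.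
  have hv0 : h v = 0 by apply/normr0_eq0; apply: (psumr_eq0P _ h0) => // u _.
  by rewrite -hD.2 hv0.
have [f' [h' [adj h'D h'n]]] := inD_descent pf pg hD h_pos.
have pf' : proper3 e f' by case/and3P: adj.
have [|p [[p_path p_last] p_size]] := IH f' h' _ pf' h'D; first by move: hn; lia.
by exists (f' :: p); split; [split; rewrite /= ?adj | rewrite /=; lia].
Qed.

End Recoloring.

Theorem mainTheorem6 (V : finType) (e : rel V) (f g : coloring V) :
  is_tree e -> proper3 e f -> proper3 e g ->
  exists n : nat, C3_dist_is e f g n /\ minD_is e f g (n%:Z).
Proof.
move=> [[e_sym e_irr] [_ e_acyclic]] pf pg.
pose walk_of_size k := exists p, C3_walk e f p g /\ size p = k.
have [h0 [h0l h0r]] := exists_labeling_lift e_sym e_irr e_acyclic (fun v => g v - f v).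
have [p0 [p0_walk _]] := inD_C3_walk e_sym e_irr e_acyclic pf pg (conj h0l h0r).
have [n [[[p [p_walk p_size]] n_min] _]] :=
  dec_inh_nat_subset_has_unique_least_element walk_of_size
    (fun k => classic (walk_of_size k)) (ex_intro _ _ (ex_intro _ p0 (conj p0_walk erefl))).
have n_le k : walk_of_size k -> (n <= k)%N by move/n_min/ssrnat.leP.
have norm1_ge h : inD e f g h -> n%:Z <= norm1 h.
  move=> hD; have [q [q_walk q_size]] := inD_C3_walk e_sym e_irr e_acyclic pf pg hD.
  by have := n_le _ (ex_intro _ q (conj q_walk erefl)); lia.
have [h [hD h_le]] := C3_walk_inD e_sym e_irr pf p_walk.
exists n; split.
  by split=> [|q q_walk]; [exists p | apply: n_le; exists q].
split; last exact: norm1_ge.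
by exists h; split=> //; have := norm1_ge h hD; rewrite p_size in h_le; lia.
Qed.
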